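(* For every real $x\geq 13$, $(x-1)\sqrt{1-\dfrac{2\ln x+4}{x}}-x+\ln x+4\geq 0$.
   Context: $\ln$ denotes the natural logarithm. *)

From Stdlib Require Import Reals.

(* Write L = ln x.  Since x - L - 4 >= 0, the claim is equivalent to
   (x - L - 4)^2 <= (x - 1)^2 (1 - (2L + 4)/x), and clearing denominators the
   difference of the two sides is (2x^2 - (L^2 + 4L + 7)x - 2L - 4)/x.  The
   tangent-line bound ln y <= y/e at y = sqrt x gives L <= (2/e) sqrt x, so L^2
   is at most about 0.55 x, which makes this quadratic in x nonnegative for
   x >= 13. *)
From Stdlib Require Import Reals Lra Psatz.
From Coquelicot Require ElemFct.
Open Scope R_scope.

Lemma exp_1_ge : 27 / 10 <= exp 1.
Proof.
  pose proof (ElemFct.exp_ge_taylor 1 5 ltac:(lra)) as Htaylor.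
  simpl in Htaylor; unfold Factorial.fact in Htaylor; simpl in Htaylor.
  lra.
Qed.

Lemma ln_le_div_exp_1 (y : R) : 0 < y -> ln y <= y / exp 1.
Proof.
  intros Hy.
  pose proof (exp_ineq1_le (ln (y / exp 1))) as Htangent.
  assert (He : 0 < exp 1) by apply exp_pos.
  rewrite exp_ln in Htangent by (apply Rdiv_lt_0_compat; lra).
  unfold Rdiv in Htangent.
  rewrite ln_mult, ln_Rinv, ln_exp in Htangent
    by (try apply Rinv_0_lt_compat; lra).
  lra.
Qed.

Lemma ln_le_sqrt (x : R) : 0 < x -> ln x <= 20 / 27 * sqrt x.
Proof.
  intros Hx.
  assert (Hs : 0 < sqrt x) by (apply sqrt_lt_R0; lra).
  assert (Hln : ln x = 2 * ln (sqrt x)).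
  { rewrite <- (sqrt_sqrt x) at 1 by lra. rewrite ln_mult by lra. ring. }
  assert (Hbound : sqrt x / exp 1 <= sqrt x / (27 / 10)).
  { apply Rmult_le_compat_l; [lra |].
    apply Rinv_le_contravar; [lra | apply exp_1_ge]. }
  pose proof (ln_le_div_exp_1 (sqrt x) Hs).
  lra.
Qed.

Lemma le_mul_sqrt (a b c : R) :
  0 <= b -> 0 <= c -> b ^ 2 <= c ^ 2 * a -> b <= c * sqrt a.
Proof.
  intros Hb Hc Hsq.
  rewrite <- (sqrt_pow2 b Hb), <- (sqrt_pow2 c Hc), <- sqrt_mult_alt
    by apply pow2_ge_0.
  now apply sqrt_le_1_alt.
Qed.

Lemma gap_numerator_nonneg (x L : R) :
  13 <= x -> 0 <= L -> L <= 20 / 27 * sqrt x ->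
  0 <= 2 * x ^ 2 - (L ^ 2 + 4 * L + 7) * x - 2 * L - 4.
Proof.
  intros Hx HL0 HLs.
  assert (Hss : sqrt x * sqrt x = x) by (apply sqrt_sqrt; lra).
  assert (Hs : 18 / 5 <= sqrt x).
  { rewrite <- (sqrt_pow2 (18 / 5)) by lra. apply sqrt_le_1_alt; lra. }
  assert (HL2 : L ^ 2 <= 400 / 729 * x) by nra.
  assert (Hlinear : 0 <= 2 * x - L ^ 2 - 4 * L - 7 - (2 * L + 4) / 13) by nra.
  nra.
Qed.

Lemma squared_gap_eq (x L : R) : x <> 0 ->
  (x - 1) ^ 2 * (1 - (2 * L + 4) / x) - (x - L - 4) ^ 2
  = (2 * x ^ 2 - (L ^ 2 + 4 * L + 7) * x - 2 * L - 4) / x.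
Proof. intros Hx. field. exact Hx. Qed.

Theorem lemma3p3 : forall x : R, 13 <= x ->
  0 <= (x - 1) * sqrt (1 - (2 * ln x + 4) / x) - x + ln x + 4.
Proof.
  intros x Hx.
  set (L := ln x).
  assert (HL0 : 0 <= L).
  { unfold L; rewrite <- ln_1; left; apply ln_increasing; lra. }
  assert (Hquad : 0 <= 2 * x ^ 2 - (L ^ 2 + 4 * L + 7) * x - 2 * L - 4).
  { apply gap_numerator_nonneg; [lra | lra | apply ln_le_sqrt; lra]. }
  assert (HB : 0 <= x - L - 4) by nra.
  assert (Hsq : (x - L - 4) ^ 2 <= (x - 1) ^ 2 * (1 - (2 * L + 4) / x)).
  { assert (0 <= (2 * x ^ 2 - (L ^ 2 + 4 * L + 7) * x - 2 * L - 4) / x)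
      by (apply Rle_mult_inv_pos; lra).
    pose proof (squared_gap_eq x L ltac:(lra)).
    lra. }
  pose proof (le_mul_sqrt _ _ (x - 1) HB ltac:(lra) Hsq).
  lra.
Qed.
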